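(* Let $\mathcal{A}=(\mathcal{T},c)$ be a DPA with $\mathcal{T}=(\Sigma,Q,\delta,q_0)$, let $\mathcal{D}$ be a DPA with $D:=L(\mathcal{D})$, let $\mathcal{T}'=(\Sigma,Q',\delta',q_0')$ be a deterministic transition system and $h:\mathcal{T}\to\mathcal{T}'$ a surjective homomorphism. Define $\mathcal{F}_0'=\{R'\subseteq Q'\mid \exists\alpha\in L(\mathcal{A})\setminus D: h(\mathrm{Inf}_{\mathcal{A}}(\alpha))=R'\}$ and $\mathcal{F}_1'=\{R'\subseteq Q'\mid \exists\alpha\in (\Sigma^\omega\setminus L(\mathcal{A}))\setminus D: h(\mathrm{Inf}_{\mathcal{A}}(\alpha))=R'\}$, where $h(P)=\{h(q)\mid q\in P\}$. Then for every priority function $c':Q'\to\mathbb{N}$: $L(\mathcal{T}',c')\equiv_D L(\mathcal{T},c)$ if and only if $c'$ is consistent with $(\mathcal{F}_0',\mathcal{F}_1')$, i.e., $\max c'(R')$ is even for all $R'\in\mathcal{F}_0'$ and odd for all $R'\in\mathcal{F}_1'$.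
   Context: A deterministic transition system is $\mathcal{T}=(\Sigma,Q,\delta,q_0)$ with finite alphabet, finite state set, transition function $\delta:Q\times\Sigma\to Q$, initial state $q_0$, all states reachable. $\mathrm{Inf}_{\mathcal{T}}(\alpha)$ (or $\mathrm{Inf}_{\mathcal{A}}(\alpha)$) is the set of states visited infinitely often by the run of $\alpha\in\Sigma^\omega$ from $q_0$. A DPA $(\mathcal{T},c)$ with $c:Q\to\mathbb{N}$ accepts those $\alpha$ for which $\max c(\mathrm{Inf}_{\mathcal{T}}(\alpha))$ is even, where $c(P)=\{c(p)\mid p\in P\}$. A homomorphism $h:\mathcal{T}\to\mathcal{T}'$ is a map $h:Q\to Q'$ with $h(q_0)=q_0'$ and $h(\delta(q,a))=\delta'(h(q),a)$. $L\equiv_D L'$ means $L\setminus D=L'\setminus D$. *)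

From mathcomp Require Import all_boot all_order.
From mathcomp Require Import boolp.
Set Implicit Arguments. Unset Strict Implicit. Unset Printing Implicit Defensive.

Record TS (Sigma Q : finType) := mkTS { delta : Q -> Sigma -> Q; q0 : Q }.

Definition run_fin (Sigma Q : finType) (T : TS Sigma Q) (w : seq Sigma) : Q :=
  foldl (delta T) (q0 T) w.

Definition all_reachable (Sigma Q : finType) (T : TS Sigma Q) : Prop :=
  forall q : Q, exists w : seq Sigma, run_fin T w = q.

Definition word (Sigma : Type) := nat -> Sigma.

Fixpoint run (Sigma Q : finType) (T : TS Sigma Q) (alpha : word Sigma) (n : nat) : Q :=
  match n with
  | 0 => q0 T
  | n'.+1 => delta T (run T alpha n') (alpha n')
  end.

Definition Inf (Sigma Q : finType) (T : TS Sigma Q) (alpha : word Sigma) : {set Q} :=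
  [set q | `[< forall N, exists n, (N <= n)%N /\ run T alpha n = q >]].

(* max c(P) (P nonempty in all uses) *)
Definition maxc (Q : finType) (c : Q -> nat) (P : {set Q}) : nat := \max_(q in P) c q.

Definition L (Sigma Q : finType) (T : TS Sigma Q) (c : Q -> nat) (alpha : word Sigma) : Prop :=
  ~~ odd (maxc c (Inf T alpha)).

Definition is_hom (Sigma Q Q' : finType) (T : TS Sigma Q) (T' : TS Sigma Q') (h : Q -> Q') : Prop :=
  h (q0 T) = q0 T' /\ forall q a, h (delta T q a) = delta T' (h q) a.

Definition equiv_mod (Sigma : Type) (L1 L2 D : word Sigma -> Prop) : Prop :=
  forall alpha, ~ D alpha -> (L1 alpha <-> L2 alpha).

Definition F0 (Sigma Q Q' : finType) (T : TS Sigma Q) (c : Q -> nat) (D : word Sigma -> Prop)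
  (h : Q -> Q') (R' : {set Q'}) : Prop :=
  exists alpha, L T c alpha /\ ~ D alpha /\ h @: Inf T alpha = R'.
Definition F1 (Sigma Q Q' : finType) (T : TS Sigma Q) (c : Q -> nat) (D : word Sigma -> Prop)
  (h : Q -> Q') (R' : {set Q'}) : Prop :=
  exists alpha, ~ L T c alpha /\ ~ D alpha /\ h @: Inf T alpha = R'.

Definition consistent (Q' : finType) (c' : Q' -> nat) (F0' F1' : {set Q'} -> Prop) : Prop :=
  (forall R', F0' R' -> ~~ odd (maxc c' R')) /\ (forall R', F1' R' -> odd (maxc c' R')).

Definition surj (A B : Type) (f : A -> B) : Prop := forall b, exists a, f a = b.

From mathcomp Require Import all_boot all_order.
From mathcomp Require Import boolp.

(* The run of T' on alpha is the image under h of the run of T, and a finite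
   state space turns "h (run n) = q' infinitely often" into "run n = q
   infinitely often for some q with h q = q'"; hence Inf_T'(alpha) is
   h(Inf_T(alpha)).  The acceptance of alpha by (T', c') is therefore decided
   by the parity of max c'(h(Inf_T(alpha))), and equivalence modulo D is
   pointwise the same as consistency on the sets realised by words outside D. *)

Definition infinitely_often (P : nat -> Prop) : Prop :=
  forall N, exists n, N <= n /\ P n.

Lemma InfP (Sigma Q : finType) (T : TS Sigma Q) (alpha : word Sigma) (q : Q) :
  reflect (infinitely_often (fun n => run T alpha n = q)) (q \in Inf T alpha).
Proof. by rewrite inE; apply: asboolP. Qed.

Lemma infinitely_often_pigeonhole {Q : finType} (f : nat -> Q) (P : Q -> Prop) :
  infinitely_often (fun n => P (f n)) ->
  exists2 q, P q & infinitely_often (fun n => f n = q).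
Proof.
move=> infP; apply: contrapT => noq.
have finite_visits q : exists N, forall n, N <= n -> P q -> f n <> q.
  have [infq | /existsNP[N finq]] := pselect (infinitely_often (fun n => f n = q)).
    by exists 0 => n _ Pq; case: noq; exists q.
  by exists N => n Nn Pq fnq; apply: finq; exists n.
have [bound boundP] := choice finite_visits.
have [n [le_max Pfn]] := infP (\max_(q : Q) bound q).
exact: boundP (f n) n (leq_trans (leq_bigmax (f n)) le_max) Pfn erefl.
Qed.

Section Homomorphism.

Context {Sigma Q Q' : finType} {T : TS Sigma Q} {T' : TS Sigma Q'} {h : Q -> Q'}.
Hypothesis hom_h : is_hom T T' h.

Lemma run_hom (alpha : word Sigma) n : run T' alpha n = h (run T alpha n).
Proof.
case: hom_h => h_q0 h_delta.
by elim: n => [|n IHn] /=; rewrite ?h_q0 // h_delta IHn.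
Qed.

Lemma Inf_hom (alpha : word Sigma) : Inf T' alpha = h @: Inf T alpha.
Proof.
apply/setP => q'; apply/InfP/imsetP => [infq' | [q /InfP infq ->]].
- have infh : infinitely_often (fun n => h (run T alpha n) = q').
    by move=> N; have [n [Nn E]] := infq' N; exists n; rewrite -run_hom.
  have [q hq infq] := @infinitely_often_pigeonhole _ _ (fun q => h q = q') infh.
  by exists q; [apply/InfP | rewrite hq].
- by move=> N; have [n [Nn E]] := infq N; exists n; rewrite run_hom E.
Qed.

Lemma L_hom (c' : Q' -> nat) (alpha : word Sigma) :
  L T' c' alpha = ~~ odd (maxc c' (h @: Inf T alpha)).
Proof. by rewrite /L Inf_hom. Qed.

End Homomorphism.

Theorem lemma1 (Sigma Q QD Q' : finType)
  (T : TS Sigma Q) (c : Q -> nat)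
  (TD : TS Sigma QD) (cD : QD -> nat)
  (T' : TS Sigma Q') (h : Q -> Q') :
  all_reachable T -> all_reachable TD -> all_reachable T' ->
  is_hom T T' h -> surj h ->
  forall c' : Q' -> nat,
    equiv_mod (L T' c') (L T c) (L TD cD) <->
    consistent c' (F0 T c (L TD cD) h) (F1 T c (L TD cD) h).
Proof.
move=> _ _ _ hom_h _ c'.
split => [equivD | [cons0 cons1] alpha notD].
- split => R' [alpha [La [notD <-]]].
    by rewrite -(L_hom hom_h); apply/(equivD _ notD).
  apply/negPn/negP; rewrite -(L_hom hom_h) => accepted'.
  exact/La/(equivD _ notD).
- rewrite (L_hom hom_h); have [La | nLa] := pselect (L T c alpha).
    by split => // _; apply: cons0; exists alpha.
  split => [/negP[] | /nLa //]; by apply: cons1; exists alpha.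
Qed.
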